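(* Let $A$ be a finite set and let $A^+=\bigcup_{n\in\mathbb{N}}A^n$ be the set of nonempty finite words over $A$. Then $(A^+,\le_{\mathrm{E}})$ is a well partially ordered set, i.e. $\le_{\mathrm{E}}$ is a partial order on $A^+$ satisfying the descending chain condition and having no infinite antichains; equivalently, for every sequence $(\mathbf{x}^{(k)})_{k\in\mathbb{N}}$ in $A^+$ there are $i<j$ with $\mathbf{x}^{(i)}\le_{\mathrm{E}}\mathbf{x}^{(j)}$.
   Context: For $\mathbf{a}=(a_1,\dots,a_n)\in A^+$ and $b\in A$, define $\mathrm{firstOcc}(\mathbf{a},b):=0$ if $b\notin\{a_1,\dots,a_n\}$ and $\mathrm{firstOcc}(\mathbf{a},b):=\min\{i : a_i=b\}$ otherwise. For $\mathbf{a}=(a_1,\dots,a_m)$, $\mathbf{b}=(b_1,\dots,b_n)\in A^+$, we write $\mathbf{a}\le_{\mathrm{E}}\mathbf{b}$ if there is a strictly increasing function $h:\{1,\dots,m\}\to\{1,\dots,n\}$ such that (1) $a_i=b_{h(i)}$ for all $i$; (2) $\{a_1,\dots,a_m\}=\{b_1,\dots,b_n\}$; (3) for every $c\in\{a_1,\dots,a_m\}$, $h(\mathrm{firstOcc}(\mathbf{a},c))=\mathrm{firstOcc}(\mathbf{b},c)$. Such an $h$ is said to witness $\mathbf{a}\le_{\mathrm{E}}\mathbf{b}$. *)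

From mathcomp Require Import all_boot.
Set Implicit Arguments. Unset Strict Implicit. Unset Printing Implicit Defensive.

(* Positions are 0-based: position i here corresponds to position i+1 in the
   paper, and the 0-based first occurrence of c in a is [index c a]
   (only used for c \in a, where the paper's firstOcc is nonzero). *)

Definition witnessE (A : eqType) (a b : seq A) (h : nat -> nat) : Prop :=
  [/\ (forall i j, i < j -> j < size a -> h i < h j),
      (forall i, i < size a -> h i < size b),
      (forall (x0 : A) i, i < size a -> nth x0 a i = nth x0 b (h i)),
      a =i b &
      (forall c, c \in a -> h (index c a) = index c b)].

Definition leE (A : eqType) (a b : seq A) : Prop := exists h, witnessE a b h.

(* Relabel every position of a word by its letter, by whether it is the first
   occurrence of that letter, and by the alphabet of the whole word.  A
   subsequence embedding between relabelled nonempty words is then a witness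
   of the embedding order: the alphabet label forces equal alphabets and the
   first-occurrence label forces first occurrences onto first occurrences.
   Hence the well quasi-ordering follows from Higman's lemma for the finite
   alphabet of labels, proved by Nash-Williams' minimal bad sequence argument.
   Antisymmetry holds because an increasing map from a word into a word of the
   same length is the identity. *)

From Stdlib Require Import Classical ClassicalEpsilon.
From mathcomp Require Import all_boot zify.
Set Implicit Arguments. Unset Strict Implicit. Unset Printing Implicit Defensive.

Lemma ex_minimal (P : nat -> Prop) :
  (exists n, P n) -> exists n, P n /\ forall m, m < n -> ~ P m.
Proof.
pose p m := if excluded_middle_informative (P m) then true else false.
have pP m : reflect (P m) (p m).
  by rewrite /p; case: excluded_middle_informative; constructor.
move=> [n /pP pn]; have exp : exists n, p n by exists n.
case: (ex_minnP exp) => m /pP Pm minm; exists m; split=> // k km /pP /minm.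
by rewrite leqNgt km.
Qed.

Lemma increasing_extraction (P : nat -> Prop) :
  (forall N, exists2 n, N < n & P n) ->
  exists phi : nat -> nat, {homo phi : p q / p < q} /\ forall k, P (phi k).
Proof.
move=> infP; have [nxt nxtP] : exists nxt, forall N, N < nxt N /\ P (nxt N).
  by apply: (choice (fun N n => N < n /\ P n)) => N; have [n] := infP N; exists n.
exists (fun k => iter k.+1 nxt 0); split; last by move=> k; exact: (nxtP _).2.
by apply: homo_ltn => [y x z|k]; [exact: ltn_trans | exact: (nxtP _).1].
Qed.

Lemma infinite_pigeonhole (T : finType) (c : nat -> T) :
  exists a, exists phi : nat -> nat,
    {homo phi : p q / p < q} /\ forall k, c (phi k) = a.
Proof.
suff [a infa] : exists a, forall N, exists2 n, N < n & c n = a.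
  by exists a; exact: (increasing_extraction infa).
apply: NNPP => noa.
have finite_fibres a : exists N, forall n, N < n -> c n <> a.
  apply: NNPP => infa; apply: noa; exists a => N; apply: NNPP => noN.
  by apply: infa; exists N => n Nn can; apply: noN; exists n.
have [N HN] := fin_all_exists finite_fibres.
by apply: (HN (c (\max_a N a).+1) _ _ erefl); rewrite ltnS leq_bigmax.
Qed.

Section Higman.
Variable T : finType.

Definition bad (f : nat -> seq T) := forall i j, i < j -> ~~ subseq (f i) (f j).

Lemma bad_splice (f : nat -> seq T) (phi : nat -> nat) (a : T) :
  bad f -> {homo phi : p q / p < q} ->
  (forall k, f (phi k) = a :: behead (f (phi k))) ->
  bad (fun k => if k < phi 0 then f k else behead (f (phi (k - phi 0)))).
Proof.
move=> bad_f phi_incr fa i j ij /=.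
have [jn|nj] := ltnP j (phi 0); first by rewrite (ltn_trans ij jn) bad_f.
have [in0|ni] := ltnP i (phi 0).
  have i_phi : i < phi (j - phi 0).
    by rewrite (leq_trans in0) // (ltnW_homo phi_incr).
  apply: contraNN (bad_f _ _ i_phi).
  by move/subseq_trans; apply; rewrite [X in subseq _ X]fa subseq_cons.
have ij' : i - phi 0 < j - phi 0 by rewrite ltn_sub2rE.
have := bad_f _ _ (phi_incr _ _ ij').
by rewrite fa [X in subseq _ X]fa /= eqxx.
Qed.

Definition extends_to_bad (l : seq (seq T)) :=
  exists2 g, bad g & forall k, k < size l -> g k = nth [::] l k.

Definition minimal_bad_next (l : seq (seq T)) (w : seq T) :=
  extends_to_bad (rcons l w) /\
  forall w', size w' < size w -> ~ extends_to_bad (rcons l w').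

Lemma extends_to_bad_next l : extends_to_bad l -> exists w, minimal_bad_next l w.
Proof.
move=> [g bad_g gl].
have : exists n w, size w = n /\ extends_to_bad (rcons l w).
  exists (size (g (size l))), (g (size l)); split=> //; exists g => // k.
  rewrite size_rcons ltnS nth_rcons leq_eqVlt => /predU1P[->|kl].
    by rewrite ltnn eqxx.
  by rewrite kl gl.
case/ex_minimal=> _ [[w [<- lw]] minw]; exists w; split=> // w' w'w lw'.
by apply: (minw _ w'w); exists w'.
Qed.

Definition next_word l := epsilon (inhabits [::]) (minimal_bad_next l).

Lemma next_wordP l : extends_to_bad l -> minimal_bad_next l (next_word l).
Proof. by move/extends_to_bad_next; exact: epsilon_spec. Qed.

Fixpoint min_bad_prefix n :=
  if n is n'.+1 then rcons (min_bad_prefix n') (next_word (min_bad_prefix n'))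
  else [::].

Definition min_bad_seq n := next_word (min_bad_prefix n).

Lemma min_bad_prefixE n : min_bad_prefix n = mkseq min_bad_seq n.
Proof. by elim: n => // n IH; rewrite mkseqS -IH. Qed.

Variable f : nat -> seq T.
Hypothesis bad_f : bad f.

Lemma min_bad_seq_minimal n :
  minimal_bad_next (mkseq min_bad_seq n) (min_bad_seq n).
Proof.
rewrite -min_bad_prefixE; apply: next_wordP.
elim: n => [|n IH]; first by exists f.
exact: (next_wordP IH).1.
Qed.

Lemma bad_min_bad_seq : bad min_bad_seq.
Proof.
move=> i j ij; have [g bad_g] := (min_bad_seq_minimal j).1.
rewrite -mkseqS size_mkseq => gj.
have gE k : k <= j -> g k = min_bad_seq k by move=> kj; rewrite gj ?nth_mkseq.
by rewrite -!gE ?(ltnW ij) ?bad_g.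
Qed.

Lemma min_bad_seq_neq0 n : min_bad_seq n != [::].
Proof.
by apply/eqP=> seq0; have := bad_min_bad_seq (ltnSn n); rewrite seq0 sub0seq.
Qed.

(* Dropping the common first letter from the words at positions [phi k] gives
   a bad sequence that agrees with [min_bad_seq] below [phi 0] but is shorter
   at [phi 0]. *)
Lemma no_bad_sequence : False.
Proof.
have [x0 _] : exists x0 : T, True.
  by case: (min_bad_seq 0) (min_bad_seq_neq0 0) => [|x0 _] //; exists x0.
have [a [phi [phi_incr phi_a]]] :=
  infinite_pigeonhole (fun n => head x0 (min_bad_seq n)).
have seqE k : min_bad_seq (phi k) = a :: behead (min_bad_seq (phi k)).
  by rewrite -(phi_a k); case: (min_bad_seq (phi k)) (min_bad_seq_neq0 (phi k)).
apply: ((min_bad_seq_minimal (phi 0)).2 (behead (min_bad_seq (phi 0)))).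
  by rewrite [in X in _ < X]seqE.
exists (fun k => if k < phi 0 then min_bad_seq k
                 else behead (min_bad_seq (phi (k - phi 0)))).
  exact: bad_splice bad_min_bad_seq phi_incr seqE.
move=> k; rewrite size_rcons size_mkseq ltnS nth_rcons size_mkseq.
rewrite leq_eqVlt => /predU1P[->|kn]; first by rewrite ltnn eqxx subnn.
by rewrite kn nth_mkseq.
Qed.

End Higman.

Lemma higman (T : finType) (f : nat -> seq T) :
  exists i j, i < j /\ subseq (f i) (f j).
Proof.
apply: NNPP => no_ij; apply: (@no_bad_sequence T f) => i j ij.
by apply/negP=> fij; apply: no_ij; exists i, j.
Qed.

Section IncreasingMaps.
Variables (h : nat -> nat) (n : nat).
Hypothesis h_incr : forall i j, i < j -> j < n -> h i < h j.

Lemma increasing_shift i j : i <= j -> j < n -> h i + (j - i) <= h j.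
Proof.
elim: j => [|j IH]; first by rewrite leqn0 => /eqP-> _; rewrite addn0.
rewrite leq_eqVlt => /predU1P[-> _|ij jn]; first by rewrite subnn addn0.
have := h_incr (ltnSn j) jn; have := IH ij (ltnW jn); lia.
Qed.

Lemma increasing_size m : (forall i, i < n -> h i < m) -> n <= m.
Proof.
move=> h_in; have [->//|n_gt0] := posnP n.
have last_n : n.-1 < n by rewrite prednK.
have := increasing_shift (leq0n _) last_n; have := h_in _ last_n; lia.
Qed.

Lemma increasing_endo_id :
  (forall i, i < n -> h i < n) -> forall i, i < n -> h i = i.
Proof.
move=> h_in i ilt; have last_n : n.-1 < n by lia.
have i_last : i <= n.-1 by lia.
have := increasing_shift (leq0n i) ilt; have := increasing_shift i_last last_n.
have := h_in _ last_n; lia.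
Qed.

End IncreasingMaps.

Section EmbeddingOrder.
Variable A : eqType.

Lemma leE_refl (a : seq A) : leE a a.
Proof. by exists id; split. Qed.

Lemma leE_trans (a b c : seq A) : leE a b -> leE b c -> leE a c.
Proof.
move=> [h [h_incr h_in h_nth ab h_first]] [h' [h'_incr h'_in h'_nth bc h'_first]].
exists (h' \o h); split=> /=.
- by move=> i j ij ja; apply: h'_incr; [exact: h_incr | exact: h_in].
- by move=> i ia; apply/h'_in/h_in.
- by move=> x0 i ia; rewrite h_nth // h'_nth // h_in.
- by move=> x; rewrite ab bc.
- by move=> x xa; rewrite h_first // h'_first // -ab.
Qed.

Lemma leE_antisym (a b : seq A) : leE a b -> leE b a -> a = b.
Proof.
move=> [h [h_incr h_in h_nth _ _]] [h' [h'_incr h'_in _ _ _]].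
have {h'_incr h'_in} size_ab : size a = size b.
  apply/eqP; rewrite eqn_leq (increasing_size h_incr h_in).
  exact: (increasing_size h'_incr h'_in).
case: a size_ab h_incr h_in h_nth => [|x0 a'] size_ab h_incr h_in h_nth.
  by apply/esym/size0nil.
apply: (eq_from_nth (x0 := x0) size_ab) => i ia.
rewrite h_nth // (increasing_endo_id h_incr) // => j ja.
by rewrite size_ab h_in.
Qed.

End EmbeddingOrder.

Lemma subseq_embedding (T : eqType) (s t : seq T) : subseq s t ->
  exists h : nat -> nat,
  [/\ forall i j, i < j -> j < size s -> h i < h j,
      forall i, i < size s -> h i < size t &
      forall x0 i, i < size s -> nth x0 s i = nth x0 t (h i)].
Proof.
elim: t s => [|y t IH] [|x s] //=; try by exists id.
case: eqP => [->|_] /IH [h [h_incr h_in h_nth]].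
  exists (fun i => if i is i'.+1 then (h i').+1 else 0); split.
  - by move=> [|i] [|j] //= ij js; rewrite ltnS h_incr.
  - by move=> [|i] //= ilt; rewrite ltnS h_in.
  - by move=> x0 [|i] //= ilt; rewrite h_nth.
exists (fun i => (h i).+1); split=> /=.
- by move=> i j ij js; rewrite ltnS h_incr.
- by move=> i ilt; rewrite ltnS h_in.
- by move=> x0 i ilt; rewrite h_nth.
Qed.

Section Annotation.
Variable A : finType.

Definition annotate (a : seq A) : seq (A * bool * {set A}) :=
  [seq (p.1, p.2 == index p.1 a, [set z in a]) | p <- zip a (iota 0 (size a))].

Lemma size_annotate a : size (annotate a) = size a.
Proof. by rewrite size_map size_zip size_iota minnn. Qed.

Lemma nth_annotate x0 a i : i < size a ->
  nth (x0, false, set0) (annotate a) i =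
  (nth x0 a i, i == index (nth x0 a i) a, [set z in a]).
Proof.
move=> ilt; rewrite (nth_map (x0, 0)) ?size_zip ?size_iota ?minnn //.
by rewrite nth_zip ?size_iota //= nth_iota.
Qed.

Lemma annotate_leE a b : a != [::] -> subseq (annotate a) (annotate b) -> leE a b.
Proof.
case: a => [//|x0 a'] _; set a := x0 :: a'.
case/subseq_embedding=> h []; rewrite !size_annotate => h_incr h_in h_nth.
have {}h_nth i : i < size a ->
    [/\ nth x0 a i = nth x0 b (h i),
        (i == index (nth x0 a i) a) = (h i == index (nth x0 b (h i)) b) &
        [set z in a] = [set z in b]].
  move=> ilt; move: (h_nth (x0, false, set0) i ilt).
  by rewrite !nth_annotate ?h_in //; case.
have [_ _ alph] := h_nth 0 isT.
exists h; split=> //.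
- by move=> y0 i ilt; rewrite !(set_nth_default x0) ?h_in //; case: (h_nth i ilt).
- by move=> z; move/setP/(_ z): alph; rewrite !inE.
move=> c ca; have ilt : index c a < size a by rewrite index_mem.
have [letter first _] := h_nth _ ilt.
by move: first; rewrite -letter nth_index // eqxx => /esym/eqP.
Qed.

End Annotation.

Theorem lemma3p1 (A : finType) :
  (forall a : seq A, a <> [::] -> leE a a) /\
  (forall a b : seq A, a <> [::] -> b <> [::] -> leE a b -> leE b a -> a = b) /\
  (forall a b c : seq A, a <> [::] -> b <> [::] -> c <> [::] ->
     leE a b -> leE b c -> leE a c) /\
  (forall x : nat -> seq A, (forall k, x k <> [::]) ->
     exists i j, i < j /\ leE (x i) (x j)).
Proof.
split; [by move=> a _; exact: leE_refl | split; [|split]].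
- by move=> a b _ _; exact: leE_antisym.
- by move=> a b c _ _ _; exact: leE_trans.
- move=> x x_neq0; have [i [j [ij sub]]] := higman (fun k => annotate (x k)).
  by exists i, j; split=> //; apply: annotate_leE sub; apply/eqP.
Qed.
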